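(* Let $\langle\mathcal{C},\mathcal{P}\rangle$ be a probabilistic knowledge base with $k$ equality constraints $\sum_{j=1}^{\ell}b_{ij}P(C_j\sqsubseteq D_j)=q_i$ over the axioms $C_1\sqsubseteq D_1,\dots,C_\ell\sqsubseteq D_\ell$; let $B=(b_{ij})$, $q=(q_i)$. Let $A$ be the $\ell\times 2^\ell$ matrix whose columns are all vectors $u\in\{0,1\}^\ell$, and let $$C=\begin{pmatrix}0 & B\\ A & -I_\ell\\ \mathbf{1} & 0\end{pmatrix},\qquad d=\begin{pmatrix}q\\0\\1\end{pmatrix},$$ where $\mathbf{1}$ is a row of $2^\ell$ ones. Define the cost vector $c\in\{0,1\}^{2^\ell+\ell}$ by: for a column of $C$ coming from a column $u$ of $A$, $c_j=0$ if $u$ represents a $\mathcal{C}$-satisfiable interpretation and $c_j=1$ otherwise; for each of the last $\ell$ columns, $c_j=0$. Then $\langle\mathcal{C},\mathcal{P}\rangle$ is satisfiable if and only if the linear program $\min\{c^{\top}\pi^x \mid C\pi^x=d,\ \pi^x\ge0\}$ is feasible and its optimal value is $0$.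
   Context: $\mathcal{EL}^{++}$ (without concrete domains): over countable sets $\mathsf{N_C}$ (concept names), $\mathsf{N_R}$ (role names), $\mathsf{N_I}$ (individual names), concept descriptions are $\top,\bot$, concept names, $C\sqcap D$, $\exists r.C$ ($r\in\mathsf{N_R}$) and nominals $\{a\}$ ($a\in\mathsf{N_I}$). An axiom (GCI) is $C\sqsubseteq D$; a role inclusion is $r_1\circ\cdots\circ r_k\sqsubseteq r$; a CBox is a finite set of axioms and role inclusions. An interpretation $\mathcal{I}=\langle\Delta^\mathcal{I},\cdot^\mathcal{I}\rangle$ has nonempty domain and maps concept names to subsets, role names to binary relations, individuals to elements, with $\top^\mathcal{I}=\Delta^\mathcal{I}$, $\bot^\mathcal{I}=\emptyset$, $(C\sqcap D)^\mathcal{I}=C^\mathcal{I}\cap D^\mathcal{I}$, $(\exists r.C)^\mathcal{I}=\{x\mid \exists y\in C^\mathcal{I},(x,y)\in r^\mathcal{I}\}$, $\{a\}^\mathcal{I}=\{a^\mathcal{I}\}$; $\mathcal{I}\models C\sqsubseteq D$ iff $C^\mathcal{I}\subseteq D^\mathcal{I}$, $\mathcal{I}\models r_1\circ\cdots\circ r_k\sqsubseteq r$ iff $r_1^\mathcal{I}\circ\cdots\circ r_k^\mathcal{I}\subseteq r^\mathcal{I}$, and $\mathcal{I}\models\mathcal{C}$ iff it satisfies every element of $\mathcal{C}$. Probabilistic semantics: given finitely many interpretations $\mathcal{I}_1,\dots,\mathcal{I}_m$ and a probability distribution $P$ on them, $P(C\sqsubseteq D)=\sum_{\mathcal{I}_i\models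 C\sqsubseteq D}P(\mathcal{I}_i)$. A probabilistic constraint is $b_1 P(C_1\sqsubseteq D_1)+\cdots+b_\ell P(C_\ell\sqsubseteq D_\ell)\bowtie q$ with $b_i,q\in\mathbb{Q}$, $\bowtie\in\{\le,\ge,=\}$; a PBox is a finite set of such constraints; a probabilistic knowledge base is a pair $\langle\mathcal{C},\mathcal{P}\rangle$ of a CBox and a PBox. It is satisfiable if there exist finitely many interpretations and a probability distribution $P$ over them such that every interpretation with $P(\mathcal{I}_i)>0$ satisfies $\mathcal{C}$ and all constraints of $\mathcal{P}$ hold. Given a CBox $\mathcal{C}$ and axioms $C_1\sqsubseteq D_1,\dots,C_n\sqsubseteq D_n$, a vector $u\in\{0,1\}^n$ represents a $\mathcal{C}$-satisfiable interpretation if there is an interpretation $\mathcal{I}\models\mathcal{C}$ with $u_i=1$ iff $\mathcal{I}\models C_i\sqsubseteq D_i$, for $1\le i\le n$. *)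

From HB Require Import structures.
From mathcomp Require Import all_boot all_order all_algebra.
From Stdlib Require Import ClassicalDescription.
Unset Strict Implicit. Unset Printing Implicit Defensive.
Import Order.TTheory GRing.Theory Num.Theory.

Inductive concept : Type :=
  | CTop : concept
  | CBot : concept
  | CName : nat -> concept
  | CAnd : concept -> concept -> concept
  | CEx : nat -> concept -> concept
  | CNom : nat -> concept.

Definition axiom := (concept * concept)%type.

(* element of a CBox: a GCI, or a role inclusion r1 ∘ rs ∘ ... ⊑ r (k >= 1) *)
Inductive cbox_elem : Type :=
  | GCI : concept -> concept -> cbox_elem
  | RI : nat -> seq nat -> nat -> cbox_elem.

Definition cbox := seq cbox_elem.

Record interp : Type := Interp {
  dom : Type;
  dom_pt : dom;
  cI : nat -> dom -> Prop;
  rI : nat -> dom -> dom -> Prop;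
  iI : nat -> dom }.
Arguments cI : clear implicits.
Arguments rI : clear implicits.
Arguments iI : clear implicits.

Fixpoint csem (I : interp) (C : concept) : dom I -> Prop :=
  match C with
  | CTop => fun _ => True
  | CBot => fun _ => False
  | CName A => cI I A
  | CAnd C1 C2 => fun x => csem I C1 x /\ csem I C2 x
  | CEx r C1 => fun x => exists y, rI I r x y /\ csem I C1 y
  | CNom a => fun x => x = iI I a
  end.

Fixpoint chain (I : interp) (rs : seq nat) : dom I -> dom I -> Prop :=
  match rs with
  | [::] => fun x y => x = y
  | r :: rs' => fun x y => exists z, rI I r x z /\ chain I rs' z y
  end.

Definition models_ax (I : interp) (a : axiom) : Prop :=
  forall x, csem I a.1 x -> csem I a.2 x.

Definition models_elem (I : interp) (e : cbox_elem) : Prop :=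
  match e with
  | GCI C D => models_ax I (C, D)
  | RI r1 rs r => forall x y, chain I (r1 :: rs) x y -> rI I r x y
  end.

Definition models_cbox (I : interp) (CB : cbox) : Prop :=
  forall e, List.In e CB -> models_elem I e.

Local Open Scope ring_scope.

Definition prob (R : realFieldType) (m : nat) (Is : 'I_m -> interp) (p : 'I_m -> R)
  (a : axiom) : R :=
  \sum_(i < m) (if excluded_middle_informative (models_ax (Is i) a) then p i else 0).

Definition pkb_satisfiable (R : realFieldType) (CB : cbox) (l k : nat)
  (ax : 'I_l -> axiom) (B : 'M[rat]_(k, l)) (q : 'cV[rat]_k) : Prop :=
  exists (m : nat) (Is : 'I_m -> interp) (p : 'I_m -> R),
    [/\ forall i, 0 <= p i,
        \sum_(i < m) p i = 1,
        forall i, 0 < p i -> models_cbox (Is i) CB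
      & forall r : 'I_k, \sum_(j < l) ratr (B r j) * prob R m Is p (ax j) = ratr (q r 0)].

Definition represents_sat (CB : cbox) (l : nat) (ax : 'I_l -> axiom) (u : 'I_l -> bool)
  : Prop :=
  exists I : interp, models_cbox I CB /\ forall i, u i = true <-> models_ax I (ax i).

(* the j-th column (j < 2^l) of A is the binary expansion of j: all of {0,1}^l *)
Definition ucol (l : nat) (j : 'I_(2 ^ l)) : 'I_l -> bool :=
  fun i => odd (j %/ 2 ^ i).

Definition Amx (R : realFieldType) (l : nat) : 'M[R]_(l, 2 ^ l) :=
  \matrix_(i < l, j < 2 ^ l) (ucol l j i)%:R.

Definition Cmx (R : realFieldType) (l k : nat) (B : 'M[rat]_(k, l))
  : 'M[R]_(k + (l + 1), 2 ^ l + l) :=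
  col_mx (row_mx 0 (map_mx ratr B))
    (col_mx (row_mx (Amx R l) (- 1%:M)) (row_mx (const_mx 1) 0)).

Definition dvec (R : realFieldType) (l k : nat) (q : 'cV[rat]_k)
  : 'cV[R]_(k + (l + 1)) :=
  col_mx (map_mx ratr q) (col_mx 0 (const_mx 1)).

Definition cost (R : realFieldType) (CB : cbox) (l : nat) (ax : 'I_l -> axiom)
  : 'cV[R]_(2 ^ l + l) :=
  col_mx (\col_(j < 2 ^ l)
            (if excluded_middle_informative (represents_sat CB l ax (ucol l j))
             then 0 else 1))
         0.

Definition lp_feasible_pt (R : realFieldType) (r n : nat) (C : 'M[R]_(r, n))
  (d : 'cV[R]_r) (x : 'cV[R]_n) : Prop :=
  C *m x = d /\ forall j, 0 <= x j 0.

Definition lp_feasible_with_opt (R : realFieldType) (r n : nat) (C : 'M[R]_(r, n))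
  (d : 'cV[R]_r) (c : 'cV[R]_n) (v : R) : Prop :=
  [/\ exists x, lp_feasible_pt R r n C d x,
      exists2 x, lp_feasible_pt R r n C d x & (c^T *m x) 0 0 = v
    & forall x, lp_feasible_pt R r n C d x -> v <= (c^T *m x) 0 0].

From HB Require Import structures.
From mathcomp Require Import all_boot all_order all_algebra.
From mathcomp Require Import zify.
From Stdlib Require Import ClassicalDescription.
From Stdlib Require ClassicalEpsilon.
Import Order.TTheory GRing.Theory Num.Theory.

(* Both sides of the equivalence are reduced to the same intermediate notion,
   a "column distribution": a probability vector pi over the 2^l columns u of
   A, supported on columns that represent a CB-satisfiable interpretation, such
   that the marginals y := A pi (y_t = probability that axiom t holds) satisfy
   the constraints B y = q.
   - Knowledge base side: a model (I_i, p_i) is pushed forward along the map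
     sending I_i to the column recording which axioms I_i satisfies; conversely
     a column distribution yields a model by choosing one interpretation for
     each satisfiable column in its support.
   - Linear program side: the cost vector is nonnegative, so optimal value 0
     means there is a feasible point of cost 0; writing such a point as
     (pi, y), feasibility says y = A pi, sum pi = 1, B y = q, and cost 0 says
     pi vanishes on unsatisfiable columns. *)

Lemma binary_encoding (l : nat) (b : nat -> bool) :
  exists2 j, j < 2 ^ l & forall t, t < l -> odd (j %/ 2 ^ t) = b t.
Proof.
elim: l b => [|l IH] b; first by exists 0.
have [j jlt jbits] := IH (fun t => b t.+1).
have b0lt2 : (b 0 : nat) < 2 by case: (b 0).
exists (j * 2 + b 0); first by rewrite expnS; move: (2 ^ l) jlt => N; lia.
case=> [|t] tlt; first by rewrite expn0 divn1 oddD oddM andbF /=; case: (b 0).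
by rewrite expnS divnMA divnMDl // (divn_small b0lt2) addn0 jbits.
Qed.

Lemma ucol_onto (l : nat) (b : 'I_l -> bool) :
  exists j : 'I_(2 ^ l), [forall t, ucol l j t == b t].
Proof.
pose bn n := if insub n is Some t then b t else false.
have [j jlt jbits] := binary_encoding l bn.
exists (Ordinal jlt); apply/forallP => t.
by rewrite /ucol /= jbits // /bn valK.
Qed.

Definition col_index (l : nat) (b : 'I_l -> bool) : 'I_(2 ^ l) :=
  xchoose (ucol_onto l b).

Arguments col_index {l}.

Lemma col_indexK (l : nat) (b : 'I_l -> bool) : ucol l (col_index b) =1 b.
Proof. by move=> t; have /forallP/(_ t)/eqP := xchooseP (ucol_onto l b). Qed.

Local Open Scope ring_scope.

Section Pushforward.
Variables (R : numDomainType) (m : nat) (J : finType) (f : 'I_m -> J) (p : 'I_m -> R).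

Definition pushforward (j : J) : R := \sum_(i < m | f i == j) p i.

Lemma sum_pushforward (g : J -> R) :
  \sum_j g j * pushforward j = \sum_(i < m) g (f i) * p i.
Proof.
rewrite (partition_big f xpredT) //=; apply: eq_bigr => j _.
by rewrite mulr_sumr; apply: eq_bigr => i /eqP ->.
Qed.

Lemma pushforward_mass : \sum_j pushforward j = \sum_(i < m) p i.
Proof.
transitivity (\sum_j 1 * pushforward j); first by apply: eq_bigr => j _; rewrite mul1r.
by rewrite sum_pushforward; apply: eq_bigr => i _ /=; rewrite mul1r.
Qed.

Hypothesis p_ge0 : forall i, 0 <= p i.

Lemma pushforward_ge0 (j : J) : 0 <= pushforward j.
Proof. exact: sumr_ge0. Qed.

Lemma pushforward_gt0 (j : J) :
  0 < pushforward j -> exists2 i, f i = j & 0 < p i.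
Proof.
have [i /andP[/eqP fij pi_gt0] | none] := pickP (fun i => (f i == j) && (0 < p i)).
  by exists i.
rewrite /pushforward big1 ?ltxx // => i fij.
by have := none i; rewrite fij lt_def p_ge0 andbT => /negbT; rewrite negbK => /eqP.
Qed.

End Pushforward.

Arguments pushforward {R m J}.
Arguments sum_pushforward {R m J}.
Arguments pushforward_mass {R m J}.
Arguments pushforward_ge0 {R m J f p}.
Arguments pushforward_gt0 {R m J f p}.

Lemma lp_opt0P (R : realFieldType) (r n : nat) (C : 'M[R]_(r, n)) (d : 'cV[R]_r)
    (c : 'cV[R]_n) :
  (forall j, 0 <= c j 0) ->
  lp_feasible_with_opt R r n C d c 0 <->
  exists2 x, lp_feasible_pt R r n C d x & (c^T *m x) 0 0 = 0.
Proof.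
move=> c_ge0; split=> [[_ opt _] // | [x Fx cx0]].
split; [by exists x | by exists x | move=> y [_ y_ge0]].
by rewrite mxE sumr_ge0 // => j _; rewrite mxE mulr_ge0.
Qed.

Section ColumnDistributions.
Variables (R : realFieldType) (CB : cbox) (l k : nat)
  (ax : 'I_l -> axiom) (B : 'M[rat]_(k, l)) (q : 'cV[rat]_k).

Definition sat_col (j : 'I_(2 ^ l)) : Prop := represents_sat CB l ax (ucol l j).

Definition penalty (j : 'I_(2 ^ l)) : R :=
  if excluded_middle_informative (sat_col j) then 0 else 1.

Definition meets_constraints (y : 'cV[R]_l) : Prop :=
  map_mx ratr B *m y = map_mx ratr q.

Definition col_distr (pi : 'cV[R]_(2 ^ l)) : Prop :=
  [/\ forall j, 0 <= pi j 0, \sum_j pi j 0 = 1,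
      forall j, 0 < pi j 0 -> sat_col j
    & meets_constraints (Amx R l *m pi)].

Lemma meets_constraintsP (y : 'cV[R]_l) :
  (forall r, \sum_(t < l) ratr (B r t) * y t 0 = ratr (q r 0)) <->
  meets_constraints y.
Proof.
split=> [By | /matrixP By r].
  by apply/matrixP => r c; rewrite ord1 !mxE -By; apply: eq_bigr => t _; rewrite mxE.
by have := By r 0; rewrite !mxE => <-; apply: eq_bigr => t _; rewrite mxE.
Qed.

Definition axiom_profile (I : interp) (t : 'I_l) : bool :=
  if excluded_middle_informative (models_ax I (ax t)) then true else false.

Lemma axiom_profileP (I : interp) (t : 'I_l) :
  axiom_profile I t <-> models_ax I (ax t).
Proof. by rewrite /axiom_profile; case: excluded_middle_informative. Qed.

Lemma probE (m : nat) (Is : 'I_m -> interp) (p : 'I_m -> R) (t : 'I_l) :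
  prob R m Is p (ax t) = \sum_(i < m) (axiom_profile (Is i) t)%:R * p i.
Proof.
rewrite /prob; apply: eq_bigr => i _; rewrite /axiom_profile.
by case: excluded_middle_informative => h /=; rewrite ?mul1r ?mul0r.
Qed.

Lemma AmxE (pi : 'cV[R]_(2 ^ l)) (t : 'I_l) :
  (Amx R l *m pi) t 0 = \sum_j (ucol l j t)%:R * pi j 0.
Proof. by rewrite mxE; apply: eq_bigr => j _; rewrite mxE. Qed.

Definition column_model (j : 'I_(2 ^ l)) : interp :=
  match excluded_middle_informative (sat_col j) with
  | left h => proj1_sig (ClassicalEpsilon.constructive_indefinite_description _ h)
  | right _ => @Interp unit tt (fun _ _ => False) (fun _ _ _ => False) (fun _ => tt)
  end.

Lemma column_modelP (j : 'I_(2 ^ l)) : sat_col j ->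
  models_cbox (column_model j) CB /\ axiom_profile (column_model j) =1 ucol l j.
Proof.
rewrite /column_model; case: excluded_middle_informative => // h _.
have [MCB prof] := proj2_sig (ClassicalEpsilon.constructive_indefinite_description _ h).
split=> // t; apply/idP/idP => [/axiom_profileP/prof // | /prof/axiom_profileP //].
Qed.

(* Knowledge base side: a model of <CB, P> induces a column distribution by
   pushing its weights forward along the axiom profiles of its interpretations. *)
Lemma col_distr_of_model :
  pkb_satisfiable R CB l k ax B q -> exists pi, col_distr pi.
Proof.
move=> [m [Is [p [p_ge0 p_sum1 p_models p_constr]]]].
pose f i := col_index (axiom_profile (Is i)).
pose pi : 'cV[R]_(2 ^ l) := \col_j pushforward f p j.
have piE j : pi j 0 = pushforward f p j by rewrite mxE.
have marginals t : (Amx R l *m pi) t 0 = prob R m Is p (ax t).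
  rewrite AmxE probE; under eq_bigr do rewrite piE.
  by rewrite sum_pushforward; apply: eq_bigr => i _; rewrite col_indexK.
exists pi; split.
- by move=> j; rewrite piE pushforward_ge0.
- by under eq_bigr do rewrite piE; rewrite pushforward_mass.
- move=> j; rewrite piE => /pushforward_gt0 [// | i <- pi_gt0].
  exists (Is i); split; first exact: p_models.
  by move=> t; rewrite col_indexK; apply: axiom_profileP.
- by apply/meets_constraintsP => r; rewrite -p_constr; under eq_bigr do rewrite marginals.
Qed.

(* Conversely, pick one CB-model per column in the support of pi. *)
Lemma model_of_col_distr (pi : 'cV[R]_(2 ^ l)) :
  col_distr pi -> pkb_satisfiable R CB l k ax B q.
Proof.
move=> [pi_ge0 pi_sum1 pi_sat /meets_constraintsP pi_constr].
have marginals t : prob R _ column_model (fun j => pi j 0) (ax t) = (Amx R l *m pi) t 0.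
  rewrite probE AmxE; apply: eq_bigr => j _.
  have [-> | pi_neq0] := eqVneq (pi j 0) 0; first by rewrite !mulr0.
  have pi_gt0 : 0 < pi j 0 by rewrite lt_def pi_neq0 pi_ge0.
  by have [_ ->] := column_modelP j (pi_sat j pi_gt0).
exists (2 ^ l)%N, column_model, (fun j => pi j 0); split => //.
- by move=> j /pi_sat/column_modelP [].
- by move=> r; rewrite -pi_constr; under eq_bigr do rewrite marginals.
Qed.

Lemma Cmx_col_mx (pi : 'cV[R]_(2 ^ l)) (y : 'cV[R]_l) :
  Cmx R l k B *m col_mx pi y =
  col_mx (map_mx ratr B *m y) (col_mx (Amx R l *m pi - y) (const_mx 1 *m pi)).
Proof. by rewrite /Cmx !mul_col_mx !mul_row_col !mul0mx add0r addr0 mulNmx mul1mx. Qed.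

Lemma cost_col_mx (pi : 'cV[R]_(2 ^ l)) (y : 'cV[R]_l) :
  ((cost R CB l ax)^T *m col_mx pi y) 0 0 = \sum_j penalty j * pi j 0.
Proof.
rewrite mxE big_split_ord /= [X in _ + X]big1 ?addr0.
  by apply: eq_bigr => j _; rewrite !mxE (unsplitK (inl j)) /= mxE.
by move=> j _; rewrite !mxE (unsplitK (inr j)) /= mxE mul0r.
Qed.

Lemma cost_ge0 (j : 'I_(2 ^ l + l)) : 0 <= cost R CB l ax j 0.
Proof.
rewrite -(splitK j); case: (split j) => j' /=; rewrite ?col_mxEu ?col_mxEd mxE //.
by case: excluded_middle_informative.
Qed.

Lemma feasible_col_mxP (pi : 'cV[R]_(2 ^ l)) (y : 'cV[R]_l) :
  lp_feasible_pt R _ _ (Cmx R l k B) (dvec R l k q) (col_mx pi y) <->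
  [/\ y = Amx R l *m pi, forall j, 0 <= pi j 0, \sum_j pi j 0 = 1
    & meets_constraints y].
Proof.
have sum_piE : (const_mx 1 *m pi : 'cV[R]_1) 0 0 = \sum_j pi j 0.
  by rewrite mxE; apply: eq_bigr => j _; rewrite mxE mul1r.
rewrite /lp_feasible_pt Cmx_col_mx /dvec; split.
  move=> [/eq_col_mx [By /eq_col_mx [/eqP marg sum1]] x_ge0]; split => //.
  - by apply/eqP; rewrite eq_sym -subr_eq0 marg.
  - by move=> j; have := x_ge0 (lshift l j); rewrite col_mxEu.
  - by rewrite -sum_piE sum1 mxE.
move=> [-> pi_ge0 pi_sum1 By]; split.
  rewrite By subrr; congr col_mx; congr col_mx.
  by apply/matrixP => a b; rewrite !ord1 sum_piE pi_sum1 mxE.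
move=> j; rewrite -(splitK j); case: (split j) => j' /=.
  by rewrite col_mxEu.
rewrite col_mxEd AmxE sumr_ge0 // => i _; exact: mulr_ge0.
Qed.

Lemma zero_penaltyP (pi : 'cV[R]_(2 ^ l)) : (forall j, 0 <= pi j 0) ->
  \sum_j penalty j * pi j 0 = 0 <-> forall j, 0 < pi j 0 -> sat_col j.
Proof.
move=> pi_ge0; have term_ge0 j : 0 <= penalty j * pi j 0.
  by rewrite mulr_ge0 // /penalty; case: excluded_middle_informative.
split=> [/(psumr_eq0P (fun j _ => term_ge0 j)) zero j pi_gt0 | sat].
  have := zero j isT; rewrite /penalty.
  case: excluded_middle_informative => [// | unsat] /=.
  by rewrite mul1r => pi0; move: pi_gt0; rewrite pi0 ltxx.
apply: big1 => j _; have [-> | pi_neq0] := eqVneq (pi j 0) 0; first by rewrite mulr0.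
have /sat : 0 < pi j 0 by rewrite lt_def pi_neq0 pi_ge0.
by rewrite /penalty; case: excluded_middle_informative => [sat_j _ | //]; rewrite mul0r.
Qed.

Lemma zero_cost_iff_col_distr :
  (exists2 x, lp_feasible_pt R _ _ (Cmx R l k B) (dvec R l k q) x
            & ((cost R CB l ax)^T *m x) 0 0 = 0) <->
  exists pi, col_distr pi.
Proof.
split=> [[x] | [pi [pi_ge0 pi_sum1 pi_sat pi_constr]]].
  rewrite -[x]vsubmxK cost_col_mx => /feasible_col_mxP [-> pi_ge0 pi_sum1 constr].
  by move/(zero_penaltyP _ pi_ge0) => pi_sat; exists (usubmx x).
exists (col_mx pi (Amx R l *m pi)); first exact/feasible_col_mxP.
by rewrite cost_col_mx; apply/zero_penaltyP.
Qed.

End ColumnDistributions.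

Theorem lemma6 (R : realFieldType) (CB : cbox) (l k : nat)
  (ax : 'I_l -> axiom) (B : 'M[rat]_(k, l)) (q : 'cV[rat]_k) :
  pkb_satisfiable R CB l k ax B q <->
  lp_feasible_with_opt R (k + (l + 1)) (2 ^ l + l)
    (Cmx R l k B) (dvec R l k q) (cost R CB l ax) 0.
Proof.
rewrite (lp_opt0P _ _ _ _ _ _ (cost_ge0 R CB l ax)) zero_cost_iff_col_distr.
split; first exact: col_distr_of_model.
by move=> [pi]; apply: model_of_col_distr.
Qed.
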